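(* The matrix $\mathcal Q=\mathrm{diag}(q^2)+\frac{N}{(1-\gamma)\kappa^2}\tilde q\tilde q^\top$ is positive semidefinite and its largest eigenvalue satisfies $\lambda_{\max}(\mathcal Q)\le\max_i(1+N\eta_i/\kappa)\big(\kappa/(\kappa+N\eta_i)\big)^2\le1$, with $\lambda_{\max}(\mathcal Q)<1$ when all $\eta_i>0$; consequently the series $\sum_{m\ge1}\tilde q^\top\mathcal Q^{m-1}\tilde q$ converges when all $\eta_i>0$.
   Context: $\eta_i\ge0$, $\sum_i\eta_i<\infty$, $N>0$; $\kappa>0$ solves $1=\sum_i\eta_i/(\kappa+N\eta_i)$, $\gamma=\sum_iN\eta_i^2/(\kappa+N\eta_i)^2$, $q_i=\kappa/(\kappa+N\eta_i)$, $\tilde q_i=\eta_iq_i^2$, $\mathrm{diag}(q^2)$ the diagonal matrix with entries $q_i^2$. *)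

From HB Require Import structures.
From mathcomp Require Import all_boot all_order all_algebra.
From mathcomp Require Import all_classical all_reals all_analysis.
Set Implicit Arguments. Unset Strict Implicit. Unset Printing Implicit Defensive.
Import Order.TTheory GRing.Theory Num.Theory.
Local Open Scope ring_scope.

Section Defs.
Variables (R : realType) (n : nat) (N kappa : R) (eta : 'I_n -> R).

Definition gammaC : R := \sum_(i < n) N * eta i ^+ 2 / (kappa + N * eta i) ^+ 2.
Definition qv (i : 'I_n) : R := kappa / (kappa + N * eta i).
Definition qtv (i : 'I_n) : R := eta i * qv i ^+ 2.
Definition qtcol : 'cV[R]_n := \col_i qtv i.
Definition Qmat : 'M[R]_n :=
  diag_mx (\row_i qv i ^+ 2)
  + (N / ((1 - gammaC) * kappa ^+ 2)) *: (qtcol *m qtcol^T).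
End Defs.

Definition psd (R : realType) (n : nat) (A : 'M[R]_n) : Prop :=
  A^T = A /\ forall x : 'cV[R]_n, 0 <= (x^T *m A *m x) 0 0.

(** Since
    [1 - gamma = (sum_i tilde q_i) / kappa], weighted Cauchy-Schwarz with the weights
    [tilde q_i] bounds the rank-one part by [(N / kappa) sum_i tilde q_i x_i^2], and
    [(1 + N eta_i / kappa) q_i^2 = q_i]; hence [0 <= x^T Q x <= sum_i q_i x_i^2 <=
    (max_i q_i) |x|^2], where [q_i <= 1], strictly when [eta_i > 0].  For a symmetric
    [0 <= Q <= rho] one has [Q^2 <= rho Q], so [0 <= x^T Q^m x <= rho^m |x|^2] and the
    series is dominated by a geometric one. *)
From HB Require Import structures.
From mathcomp Require Import all_boot all_order all_algebra.
From mathcomp Require Import all_classical all_reals all_analysis.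
From mathcomp Require Import ring lra.
Set Implicit Arguments. Unset Strict Implicit. Unset Printing Implicit Defensive.
Import Order.TTheory GRing.Theory Num.Theory numFieldNormedType.Exports.
Local Open Scope ring_scope.

Section QuadraticForm.
Variables (R : realFieldType) (n : nat).
Implicit Types (A B S : 'M[R]_n) (x v : 'cV[R]_n).

Definition qform A x : R := (x^T *m A *m x) 0 0.

Lemma qformD A B x : qform (A + B) x = qform A x + qform B x.
Proof. by rewrite /qform mulmxDr mulmxDl mxE. Qed.

Lemma qformB A B x : qform (A - B) x = qform A x - qform B x.
Proof. by rewrite /qform mulmxBr mulmxBl !mxE. Qed.

Lemma qformZ a A x : qform (a *: A) x = a * qform A x.
Proof. by rewrite /qform -scalemxAr -scalemxAl mxE. Qed.

Lemma qform1 x : qform 1%:M x = \sum_i x i 0 ^+ 2.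
Proof. by rewrite /qform mulmx1 mxE; apply: eq_bigr => i _; rewrite mxE expr2. Qed.

Lemma qform1_ge0 x : 0 <= qform 1%:M x.
Proof. by rewrite qform1 sumr_ge0 // => i _; rewrite sqr_ge0. Qed.

Lemma qform1_gt0 x : x != 0 -> 0 < qform 1%:M x.
Proof.
move=> x_neq0; rewrite lt_neqAle qform1_ge0 andbT eq_sym qform1.
apply: contra x_neq0 => /eqP /psumr_eq0P x2_eq0; apply/eqP/colP => i.
by apply/eqP; rewrite mxE -sqrf_eq0 x2_eq0 // => j _; rewrite sqr_ge0.
Qed.

Lemma qform_scalar a x : qform a%:M x = a * qform 1%:M x.
Proof. by rewrite -qformZ scalemx1. Qed.

Lemma qform_sym_conj S A x : S^T = S -> qform (S *m A *m S) x = qform A (S *m x).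
Proof. by move=> S_sym; rewrite /qform trmx_mul S_sym !mulmxA. Qed.

Lemma qform_diag (d : 'rV[R]_n) x : qform (diag_mx d) x = \sum_i d 0 i * x i 0 ^+ 2.
Proof. by rewrite /qform mul_mx_diag mxE; apply: eq_bigr => i _; rewrite !mxE; ring. Qed.

Lemma qform_outer v x : qform (v *m v^T) x = (\sum_i v i 0 * x i 0) ^+ 2.
Proof.
rewrite /qform !mulmxA -(mulmxA (x^T *m v)) mxE big_ord1 expr2 !mxE.
by congr (_ * _); apply: eq_bigr => i _; rewrite !mxE // mulrC.
Qed.

Lemma eigenvalue_le_qform A rho a :
  (forall x, qform A x <= rho * qform 1%:M x) -> eigenvalue A a -> a <= rho.
Proof.
move=> A_le /eigenvalueP [v vA v_neq0].
have v_gt0 : 0 < qform 1%:M v^T by rewrite qform1_gt0 // trmx_eq0.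
have : qform A v^T = a * qform 1%:M v^T.
  by rewrite /qform trmxK vA -scalemxAl mxE mulmx1.
by rewrite -(ler_pM2r v_gt0) => <-.
Qed.

End QuadraticForm.

Lemma sqr_wsum_le (R : realFieldType) (I : finType) (w x : I -> R) :
  (forall i, 0 <= w i) ->
  (\sum_i w i * x i) ^+ 2 <= (\sum_i w i) * \sum_i w i * x i ^+ 2.
Proof.
move=> w_ge0; set W := \sum_i w i; set S := \sum_i w i * x i.
have [W0|W_neq0] := eqVneq W 0.
  have S0 : S = 0.
    by rewrite /S big1 // => i _; rewrite (psumr_eq0P _ W0) ?mul0r.
  by rewrite S0 W0 expr2 !mul0r.
have W_gt0 : 0 < W by rewrite lt_def W_neq0 sumr_ge0.
have : 0 <= \sum_i w i * (W * x i - S) ^+ 2.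
  by apply: sumr_ge0 => i _; rewrite mulr_ge0 ?sqr_ge0.
have -> : \sum_i w i * (W * x i - S) ^+ 2 =
          W * (W * (\sum_i w i * x i ^+ 2) - S ^+ 2).
  rewrite (eq_bigr (fun i => W ^+ 2 * (w i * x i ^+ 2) - 2 * W * S * (w i * x i)
                             + S ^+ 2 * w i)); last by move=> i _; ring.
  by rewrite big_split /= sumrB -!mulr_sumr -/W -/S; ring.
by rewrite pmulr_rge0 // subr_ge0.
Qed.

Section OperatorBound.
Variables (R : realFieldType) (n : nat) (Q : 'M[R]_n) (rho : R).
Hypotheses (Q_sym : Q^T = Q) (rho_gt0 : 0 < rho).
Hypothesis qform_ge0 : forall x, 0 <= qform Q x.
Hypothesis qform_le : forall x, qform Q x <= rho * qform 1%:M x.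

(* The forms of the nonnegative matrices (rho - Q) Q (rho - Q) and Q (rho - Q) Q
   add up to rho (rho Q - Q^2): the cubic terms cancel. *)
Lemma qform_sqr_le x : qform (Q *m Q) x <= rho * qform Q x.
Proof.
set S := rho%:M - Q.
have S_sym : S^T = S by rewrite /S linearB /= tr_scalar_mx Q_sym.
have SQS_ge0 : 0 <= qform (S *m Q *m S) x by rewrite qform_sym_conj.
have QSQ_ge0 : 0 <= qform (Q *m S *m Q) x.
  by rewrite qform_sym_conj // /S qformB qform_scalar subr_ge0.
move: SQS_ge0 QSQ_ge0; rewrite /S !(mulmxBl, mulmxBr, mul_scalar_mx, mul_mx_scalar).
rewrite -!scalemxAl ?scalerA -!mulmxA !(qformB, qformD, qformZ).
set a := qform Q x; set b := qform (Q *m Q) x => ? ?.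
have : 0 <= rho * (rho * a - b) by lra.
by rewrite pmulr_rge0 // subr_ge0.
Qed.

Lemma qform_expSS m x : qform (Q ^+ m.+2) x = qform (Q ^+ m) (Q *m x).
Proof. by rewrite exprS exprSr mulrA -!mulmxE qform_sym_conj. Qed.

Lemma qform_exp_step m x :
  0 <= qform (Q ^+ m) x /\ qform (Q ^+ m.+1) x <= rho * qform (Q ^+ m) x.
Proof.
elim/ltn_ind: m x => -[|[|m]] IH x.
- by rewrite expr0 expr1 qform1_ge0.
- by rewrite expr1 expr2 -mulmxE qform_ge0 qform_sqr_le.
- by rewrite !qform_expSS; apply: IH.
Qed.

Lemma qform_exp_ge0 m x : 0 <= qform (Q ^+ m) x.
Proof. exact: (qform_exp_step m x).1. Qed.

Lemma qform_exp_le m x : qform (Q ^+ m) x <= rho ^+ m * qform 1%:M x.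
Proof.
elim: m => [|m IH]; first by rewrite expr0 mul1r.
apply: le_trans (qform_exp_step m x).2 _.
by rewrite exprS -mulrA ler_pM2l.
Qed.

End OperatorBound.

Lemma is_cvg_series_qform_exp (R : realType) n (Q : 'M[R]_n) rho x :
  Q^T = Q -> 0 < rho < 1 -> (forall y, 0 <= qform Q y) ->
  (forall y, qform Q y <= rho * qform 1%:M y) ->
  cvgn (series (fun m => qform (Q ^+ m) x)).
Proof.
move=> Q_sym /andP[rho_gt0 rho_lt1] Q_ge0 Q_le.
apply: (@series_le_cvg _ _ (geometric (qform 1%:M x) rho)).
- by move=> m; apply: (qform_exp_ge0 Q_sym rho_gt0 Q_ge0 Q_le).
- by move=> m; rewrite geometric_ge0 ?qform1_ge0 ?ltW.
- by move=> m /=; rewrite mulrC (qform_exp_le Q_sym rho_gt0 Q_ge0 Q_le).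
- by apply: is_cvg_geometric_series; rewrite ger0_norm ?ltW.
Qed.

Section ScaledMatrix.
Variables (R : realType) (n : nat) (N kappa : R) (eta : 'I_n -> R).
Local Notation q := (qv N kappa eta).
Local Notation qt := (qtv N kappa eta).
Local Notation Q := (Qmat N kappa eta).
Local Notation c := (N / ((1 - gammaC N kappa eta) * kappa ^+ 2)).
Local Notation qmax := (\big[Num.max/0]_i q i).

Lemma tr_Qmat : Q^T = Q.
Proof. by rewrite /Qmat linearD /= tr_diag_mx linearZ /= trmx_mul trmxK. Qed.

Lemma qform_QmatE x :
  qform Q x = \sum_i q i ^+ 2 * x i 0 ^+ 2 + c * (\sum_i qt i * x i 0) ^+ 2.
Proof.
rewrite qformD qformZ qform_diag qform_outer.
by congr (_ + _ * (_ ^+ 2)); apply: eq_bigr => i _; rewrite !mxE.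
Qed.

Hypotheses (eta_ge0 : forall i, 0 <= eta i) (N_gt0 : 0 < N) (kappa_gt0 : 0 < kappa).

Lemma kappa_Neta_gt0 i : 0 < kappa + N * eta i.
Proof. exact: ltr_wpDr (mulr_ge0 (ltW N_gt0) (eta_ge0 i)) kappa_gt0. Qed.

Lemma qv_gt0 i : 0 < q i.
Proof. by rewrite divr_gt0 ?kappa_Neta_gt0. Qed.

Lemma qv_le1 i : q i <= 1.
Proof. by rewrite /qv ler_pdivrMr ?kappa_Neta_gt0 // mul1r lerDl mulr_ge0 ?eta_ge0 ?ltW. Qed.

Lemma qv_lt1 i : 0 < eta i -> q i < 1.
Proof. by move=> eta_gt0; rewrite /qv ltr_pdivrMr ?kappa_Neta_gt0 // mul1r ltrDl mulr_gt0. Qed.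

Lemma qtv_ge0 i : 0 <= qt i.
Proof. by rewrite /qtv mulr_ge0 ?eta_ge0 ?sqr_ge0. Qed.

Lemma growth_mul_qv2 i : (1 + N * eta i / kappa) * q i ^+ 2 = q i.
Proof. by rewrite /qv; field; rewrite !gt_eqF ?kappa_Neta_gt0. Qed.

Hypothesis kappa_def : 1 = \sum_i eta i / (kappa + N * eta i).

Lemma dim_gt0 : (0 < n)%N.
Proof.
case: n eta kappa_def => // eta0; rewrite big_ord0 => /eqP.
by rewrite oner_eq0.
Qed.

Lemma one_sub_gammaC : 1 - gammaC N kappa eta = (\sum_i qt i) / kappa.
Proof.
rewrite /gammaC {1}kappa_def -sumrB mulr_suml; apply: eq_bigr => i _.
by rewrite /qtv /qv; field; rewrite !gt_eqF ?kappa_Neta_gt0.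
Qed.

Lemma rank_one_coef_ge0 : 0 <= c.
Proof.
rewrite one_sub_gammaC divr_ge0 ?(ltW N_gt0) // mulr_ge0 ?sqr_ge0 //.
by rewrite divr_ge0 ?(ltW kappa_gt0) ?sumr_ge0 // => i _; apply: qtv_ge0.
Qed.

(* [c] is [N / (kappa * sum_i qt i)]; if that sum vanishes, so does [c]. *)
Lemma rank_one_coef_mul_le : c * \sum_i qt i <= N / kappa.
Proof.
rewrite one_sub_gammaC; have [->|W_neq0] := eqVneq (\sum_i qt i) 0.
  by rewrite mulr0 divr_ge0 ?ltW.
suff -> : N / ((\sum_i qt i) / kappa * kappa ^+ 2) * \sum_i qt i = N / kappa by [].
by field; rewrite W_neq0 gt_eqF.
Qed.

Lemma qform_Qmat_ge0 x : 0 <= qform Q x.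
Proof.
rewrite qform_QmatE addr_ge0 ?(mulr_ge0 rank_one_coef_ge0) ?sqr_ge0 //.
by rewrite sumr_ge0 // => i _; rewrite mulr_ge0 ?sqr_ge0.
Qed.

Lemma qform_Qmat_le x : qform Q x <= \sum_i q i * x i 0 ^+ 2.
Proof.
have -> : \sum_i q i * x i 0 ^+ 2 =
          \sum_i q i ^+ 2 * x i 0 ^+ 2 + N / kappa * \sum_i qt i * x i 0 ^+ 2.
  rewrite mulr_sumr -big_split /=; apply: eq_bigr => i _.
  by rewrite -[in LHS]growth_mul_qv2 /qtv; ring.
rewrite qform_QmatE lerD2l.
apply: le_trans (ler_wpM2l rank_one_coef_ge0 (sqr_wsum_le _ qtv_ge0)) _.
by rewrite mulrA ler_wpM2r ?rank_one_coef_mul_le ?sumr_ge0 // => i _;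
  rewrite mulr_ge0 ?qtv_ge0 ?sqr_ge0.
Qed.

Lemma qform_Qmat_le_max x : qform Q x <= qmax * qform 1%:M x.
Proof.
rewrite qform1 mulr_sumr; apply: le_trans (qform_Qmat_le x) _.
by apply: ler_sum => i _; rewrite ler_wpM2r ?sqr_ge0 ?le_bigmax.
Qed.

Lemma qmax_gt0 : 0 < qmax.
Proof. exact: lt_le_trans (qv_gt0 (Ordinal dim_gt0)) (le_bigmax _ _ _). Qed.

Lemma qmax_le1 : qmax <= 1.
Proof. by rewrite bigmax_le // => i _; apply: qv_le1. Qed.

Lemma qmax_lt1 : (forall i, 0 < eta i) -> qmax < 1.
Proof. by move=> eta_gt0; rewrite bigmax_lt // => i _; apply: qv_lt1. Qed.

End ScaledMatrix.

Theorem mainTheorem11 (R : realType) (n : nat) (N kappa : R) (eta : 'I_n -> R)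
  (eta_ge0 : forall i, 0 <= eta i) (N_gt0 : 0 < N) (kappa_gt0 : 0 < kappa)
  (kappa_def : 1 = \sum_(i < n) eta i / (kappa + N * eta i)) :
  let Q := Qmat N kappa eta in
  let bnd := \big[Num.max/0]_(i < n)
               ((1 + N * eta i / kappa) * (kappa / (kappa + N * eta i)) ^+ 2) in
  [/\ psd Q,
      (forall a : R, eigenvalue Q a -> a <= bnd),
      bnd <= 1,
      ((forall i, 0 < eta i) -> forall a : R, eigenvalue Q a -> a < 1) &
      ((forall i, 0 < eta i) ->
         cvgn (series (fun m : nat =>
           ((qtcol N kappa eta)^T *m (Q ^+ m) *m qtcol N kappa eta) 0 0)))].
Proof.
move=> Q bnd.
have -> : bnd = \big[Num.max/0]_i qv N kappa eta i.
  by apply: eq_bigr => i _; apply: growth_mul_qv2.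
have Q_ge0 := qform_Qmat_ge0 eta_ge0 N_gt0 kappa_gt0 kappa_def.
have Q_le := qform_Qmat_le_max eta_ge0 N_gt0 kappa_gt0 kappa_def.
have eig_le a : eigenvalue Q a -> a <= \big[Num.max/0]_i qv N kappa eta i.
  exact: eigenvalue_le_qform.
split => [|||eta_gt0|eta_gt0].
- by split; [apply: tr_Qmat | apply: Q_ge0].
- exact: eig_le.
- exact: qmax_le1.
- by move=> a /eig_le /le_lt_trans; apply; apply: qmax_lt1.
- apply: is_cvg_series_qform_exp (tr_Qmat _ _ _) _ Q_ge0 Q_le.
  by rewrite (qmax_gt0 eta_ge0 N_gt0 kappa_gt0 kappa_def) qmax_lt1.
Qed.
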